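(* Let $\alpha,\beta,\gamma\in\mathbb{Z}[i]$ satisfy $\alpha^2+i\beta^2+\gamma^2=0$, $\alpha\beta\gamma\neq0$, $\gcd(\alpha,\beta)\in U$, and suppose $\beta\equiv 0\pmod{(1+i)^2}$. Then, after multiplying $\alpha,\beta,\gamma$ by suitable units and possibly interchanging the first and third coordinates, one obtains $(X,Y,Z)$ with $X^2+iY^2=Z^2$, $X,Z\in O^I$, $Y=(1+i)^{2+a_1}p_2^{a_2}\cdots p_m^{a_m}$ (integers $a_j\ge0$, $p_j$ distinct Gaussian primes in $O^I$), $\gcd(X,Y)\in U$, $XYZ\neq 0$. Conversely, if $(X,Y,Z)$ satisfies $X^2+iY^2=Z^2$, $\gcd(X,Y)\in U$, $XYZ\ne0$, then $(X,Y,iZ)$ is a solution of $X^2+iY^2+Z^2=0$ with the same conditions.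
   Context: $\mathbb{Z}[i]$ is the ring of Gaussian integers, $U=\{1,-1,i,-i\}$ its unit group; $R(\alpha),I(\alpha)$ are real and imaginary parts. $\gcd(x,y)\in U$ means $x,y$ have no common non-unit divisor. $O=\{\alpha: R(\alpha)+I(\alpha)\equiv1\pmod 2\}$, $O^I=\{\alpha\in O: R(\alpha)\equiv 1\pmod 4\}$. *)

From mathcomp Require Import all_boot all_order all_algebra.
From Stdlib Require Import List.
Set Implicit Arguments. Unset Strict Implicit. Unset Printing Implicit Defensive.
Import Order.TTheory GRing.Theory Num.Theory.
Local Open Scope ring_scope.

Record gint := GI { re : int; im : int }.

Definition g0 : gint := GI 0 0.
Definition g1 : gint := GI 1 0.
Definition gi : gint := GI 0 1.
Definition gadd (x y : gint) : gint := GI (re x + re y) (im x + im y).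
Definition gopp (x : gint) : gint := GI (- re x) (- im x).
Definition gmul (x y : gint) : gint :=
  GI (re x * re y - im x * im y) (re x * im y + im x * re y).
Fixpoint gpow (x : gint) (n : nat) : gint :=
  match n with O => g1 | S k => gmul x (gpow x k) end.

Definition one_plus_i : gint := GI 1 1.

Definition gunit (x : gint) : Prop :=
  x = g1 \/ x = gopp g1 \/ x = gi \/ x = gopp gi.

Definition gdvd (d x : gint) : Prop := exists q : gint, x = gmul d q.

Definition gcd_unit (x y : gint) : Prop :=
  forall d : gint, gdvd d x -> gdvd d y -> gunit d.

Definition gprime (p : gint) : Prop :=
  p <> g0 /\ ~ gunit p /\
  forall a b : gint, p = gmul a b -> gunit a \/ gunit b.

Definition inO (x : gint) : Prop := ((re x + im x) %% 2)%Z = 1.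
Definition inOI (x : gint) : Prop := inO x /\ ((re x) %% 4)%Z = 1.

Fixpoint gprodpow (s : list (gint * nat)) : gint :=
  match s with
  | nil => g1
  | (p, a) :: s' => gmul (gpow p a) (gprodpow s')
  end.

(* Since (1+i)^2 divides beta and gcd(alpha, beta) is a unit, alpha is odd. Factoring
   beta = e (1+i)^(2+a) p_2^a_2 ... p_m^a_m with a unit e and primes normalized into O^I
   (induction on the norm) and multiplying by v = e^-1 puts Y = v beta into the required
   shape. Then (v alpha)^2 + (v gamma)^2 = -i (v beta)^2 is divisible by (1+i)^4 = -4;
   reading real parts mod 4, one of v alpha, v gamma has odd real and even imaginary part
   and i times the other has too. A sign puts the first into O^I and a sign times i the
   second; as these multipliers square to 1 and -1, the equation becomes X^2 + iY^2 = Z^2.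
   Coprimality survives the swap of alpha and gamma by Bezout in the Euclidean ring Z[i],
   since a common divisor of gamma and beta divides alpha^2 = -(i beta^2 + gamma^2). *)

From mathcomp Require Import all_boot all_order all_algebra.
From Stdlib Require Import List.
From mathcomp Require Import zify.
From Stdlib Require Import Ring Classical.
Set Implicit Arguments. Unset Strict Implicit.
Import Order.TTheory GRing.Theory Num.Theory.
Local Open Scope ring_scope.

Lemma gint_ext (x y : gint) : re x = re y -> im x = im y -> x = y.
Proof. by case: x; case: y => /= ? ? ? ? -> ->. Qed.

Definition gsub (x y : gint) : gint := gadd x (gopp y).

Lemma gint_ring_theory : ring_theory g0 g1 gadd gmul gsub gopp (@eq gint).
Proof. by constructor=> *; apply: gint_ext; rewrite /gadd /gmul /gsub /gopp /=; lia. Qed.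

Add Ring gint_ring : gint_ring_theory.

Lemma gaddr_eq0 (x y : gint) : gadd x y = g0 -> x = gopp y.
Proof.
move=> e; have -> : x = gsub (gadd x y) y by rewrite /gsub; ring.
by rewrite e /gsub; ring.
Qed.

Lemma gmul_gi_gi : gmul gi gi = gopp g1.
Proof. exact: gint_ext. Qed.

Lemma gpowD (x : gint) (m n : nat) : gpow x (m + n) = gmul (gpow x m) (gpow x n).
Proof. by elim: m => [|m IH]; rewrite ?add0n ?addSn /= ?IH; ring. Qed.

Definition gnorm (x : gint) : int := re x * re x + im x * im x.

Lemma gnormM (x y : gint) : gnorm (gmul x y) = gnorm x * gnorm y.
Proof. by rewrite /gnorm /gmul /=; lia. Qed.

Lemma gnorm_ge0 (x : gint) : 0 <= gnorm x.
Proof. by rewrite /gnorm; nia. Qed.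

Lemma gnorm_gt0 (x : gint) : x <> g0 -> 0 < gnorm x.
Proof.
case: x => a b hx; rewrite /gnorm /=.
have [a0|] := eqVneq a 0; last by nia.
have [b0|] := eqVneq b 0; last by nia.
by case: hx; rewrite a0 b0.
Qed.

Lemma gnorm_ind (P : gint -> Prop) :
  (forall x, (forall y, gnorm y < gnorm x -> P y) -> P x) -> forall x, P x.
Proof.
move=> IH x; have [k] := ubnP (absz (gnorm x)); elim: k x => // k IHk x hx.
apply: IH => y hy; apply: IHk; have := gnorm_ge0 y; lia.
Qed.

Lemma gunitE (x : gint) : gunit x <-> gnorm x = 1.
Proof.
split; first by case=> [->|[->|[->|->]]].
case: x => a b; rewrite /gnorm /gunit /= => h.
have [|[|]] : a = 0 \/ a = 1 \/ a = -1 by nia.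
all: have [|[|]] : b = 0 \/ b = 1 \/ b = -1 by nia.
all: move=> *; subst; rewrite /g1 /gi /gopp /=.
all: first [lia | by left | by right; left | by right; right; left | by right; right; right].
Qed.

Lemma gunit_neq0 (u : gint) : gunit u -> u <> g0.
Proof. by move=> /gunitE + e; rewrite e. Qed.

Lemma gunitM (u v : gint) : gunit u -> gunit v -> gunit (gmul u v).
Proof. by rewrite !gunitE gnormM => -> ->. Qed.

Lemma gunit_inv (u : gint) : gunit u -> exists2 u', gmul u u' = g1 & gunit u'.
Proof.
case=> [->|[->|[->|->]]]; [exists g1 | exists (gopp g1) | exists (gopp gi) | exists gi].
all: by [apply: gint_ext | rewrite /gunit; tauto].
Qed.

Lemma gunit_sqr1 (s : gint) : gmul s s = g1 -> gunit s.
Proof.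
move=> /(f_equal gnorm); rewrite gnormM gunitE => e.
have := gnorm_ge0 s; move: e; rewrite /gnorm /g1 /=; nia.
Qed.

Lemma gmul_neq0 (x y : gint) : x <> g0 -> y <> g0 -> gmul x y <> g0.
Proof.
move=> /gnorm_gt0 hx /gnorm_gt0 hy /(f_equal gnorm); rewrite gnormM [gnorm g0]/gnorm /=; nia.
Qed.

Lemma gnorm_nonunit (x : gint) : x <> g0 -> ~ gunit x -> 2 <= gnorm x.
Proof. by move=> /gnorm_gt0 hx; rewrite gunitE; lia. Qed.

Lemma gmul_neq0l (a b : gint) : gmul a b <> g0 -> a <> g0.
Proof. by move=> hab a0; apply: hab; rewrite a0; apply: gint_ext => /=; lia. Qed.

Lemma gmul_neq0r (a b : gint) : gmul a b <> g0 -> b <> g0.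
Proof. by move=> hab b0; apply: hab; rewrite b0; apply: gint_ext => /=; lia. Qed.

Lemma gnorm_mull_lt (a b : gint) : gmul a b <> g0 -> ~ gunit b -> gnorm a < gnorm (gmul a b).
Proof.
move=> hab hb; rewrite gnormM.
have := gnorm_nonunit (gmul_neq0r hab) hb; have := gnorm_gt0 (gmul_neq0l hab); nia.
Qed.

Lemma gnorm_mulr_lt (a b : gint) : gmul a b <> g0 -> ~ gunit a -> gnorm b < gnorm (gmul a b).
Proof.
move=> hab ha; rewrite gnormM.
have := gnorm_nonunit (gmul_neq0l hab) ha; have := gnorm_gt0 (gmul_neq0r hab); nia.
Qed.

Lemma gmulKu (s s' x : gint) : gmul s s' = g1 -> gmul s' (gmul s x) = x.
Proof. by move=> ss'; transitivity (gmul (gmul s s') x); [ring | rewrite ss'; ring]. Qed.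

Lemma gmulKVu (s s' x : gint) : gmul s s' = g1 -> gmul s (gmul s' x) = x.
Proof. by move=> ss'; transitivity (gmul (gmul s s') x); [ring | rewrite ss'; ring]. Qed.

Lemma gdvd_refl (x : gint) : gdvd x x.
Proof. by exists g1; ring. Qed.

Lemma gdvd_trans (a b c : gint) : gdvd a b -> gdvd b c -> gdvd a c.
Proof. by move=> [q ->] [r ->]; exists (gmul q r); ring. Qed.

Lemma gdvd_mulr (a b c : gint) : gdvd a b -> gdvd a (gmul b c).
Proof. by move=> [q ->]; exists (gmul q c); ring. Qed.

Lemma gdvd_mull (a b c : gint) : gdvd a b -> gdvd a (gmul c b).
Proof. by move=> [q ->]; exists (gmul q c); ring. Qed.

Lemma gdvd_add (a b c : gint) : gdvd a b -> gdvd a c -> gdvd a (gadd b c).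
Proof. by move=> [q ->] [r ->]; exists (gadd q r); ring. Qed.

Lemma gdvd_opp (a b : gint) : gdvd a b -> gdvd a (gopp b).
Proof. by move=> [q ->]; exists (gopp q); ring. Qed.

Lemma gdvd_unit_mull (a b u : gint) : gunit u -> gdvd a (gmul u b) -> gdvd a b.
Proof. by move=> /gunit_inv [u' uu' _] /(gdvd_mull u'); rewrite gmulKu. Qed.

Lemma gcd_unit_mul_units (a b u v : gint) :
  gunit u -> gunit v -> gcd_unit a b -> gcd_unit (gmul u a) (gmul v b).
Proof. by move=> hu hv hab d /(gdvd_unit_mull hu) ha /(gdvd_unit_mull hv); apply: hab. Qed.

Lemma nearest_multiple (x n : int) : 0 < n -> exists q : int, -n <= 2 * (x - q * n) <= n.
Proof.
move=> hn; exists ((2 * x + n) %/ (2 * n))%Z.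
have := divz_eq (2 * x + n) (2 * n).
have : (0 <= (2 * x + n) %% (2 * n))%Z by apply: modz_ge0; lia.
have : ((2 * x + n) %% (2 * n) < 2 * n)%Z by apply: ltz_pmod; lia.
nia.
Qed.

Definition gconj (x : gint) : gint := GI (re x) (- im x).

(* Round a / b = a conj(b) / N(b) componentwise to the nearest Gaussian integer. *)
Lemma gdivision (a b : gint) : b <> g0 ->
  exists q r, a = gadd (gmul b q) r /\ gnorm r < gnorm b.
Proof.
move=> /gnorm_gt0 hn; set c := gmul a (gconj b).
have [q1 h1] := nearest_multiple (re c) hn.
have [q2 h2] := nearest_multiple (im c) hn.
set r := gsub a (gmul b (GI q1 q2)).
exists (GI q1 q2), r; split; first by rewrite /r /gsub; ring.
have := gnormM r (gconj b).
have -> : gmul r (gconj b) = GI (re c - q1 * gnorm b) (im c - q2 * gnorm b).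
  by apply: gint_ext; rewrite /r /c /gnorm /gsub /gmul /gadd /gopp /gconj /=; lia.
have -> : gnorm (gconj b) = gnorm b by rewrite /gnorm /=; lia.
rewrite {1}/gnorm /=; move: h1 h2 (gnorm_ge0 r).
set e1 := re c - q1 * _; set e2 := im c - q2 * _; move=> h1 h2 hr he.
have : 4 * (e1 * e1) <= gnorm b * gnorm b by nia.
have : 4 * (e2 * e2) <= gnorm b * gnorm b by nia.
nia.
Qed.

Lemma gbezout (a b : gint) : b <> g0 ->
  exists g x y, g = gadd (gmul x a) (gmul y b) /\ gdvd g a /\ gdvd g b.
Proof.
elim/gnorm_ind: b a => b IH a hb.
have [q [r [-> hr]]] := gdivision a hb.
case: (classic (r = g0)) => [-> | hr0].
  exists b, g0, g1; split; first by ring.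
  by split; [exists q; ring | exact: gdvd_refl].
have [g [x [y [-> [gb gr]]]]] := IH r hr b hr0.
exists (gadd (gmul x b) (gmul y r)), y, (gsub x (gmul y q)).
by split; [rewrite /gsub; ring | split; [apply: gdvd_add => //; apply: gdvd_mulr |]].
Qed.

Lemma gcd_unit_bezout (a b : gint) : b <> g0 -> gcd_unit a b ->
  exists x y, gadd (gmul x a) (gmul y b) = g1.
Proof.
move=> /(gbezout a) [g [x [y [eg [ga gb]]]]] /(_ g ga gb) /gunit_inv [g' gg' _].
by exists (gmul g' x), (gmul g' y); rewrite -gg' eg; ring.
Qed.

Lemma gcd_unit_sqrl (a b : gint) : b <> g0 -> gcd_unit a b -> gcd_unit (gmul a a) b.
Proof.
move=> hb hab; have [x [y exy]] := gcd_unit_bezout hb hab.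
move=> d da2 db; apply: hab => //.
have -> : a = gadd (gmul x (gmul a a)) (gmul (gmul y a) b).
  by transitivity (gmul a (gadd (gmul x a) (gmul y b))); [rewrite exy | ]; ring.
by apply: gdvd_add; apply: gdvd_mull.
Qed.

Lemma opi_dvdP (x : gint) : gdvd one_plus_i x <-> ~ inO x.
Proof.
split; first by move=> [[c d] ->]; rewrite /inO /gmul /one_plus_i /=; lia.
case: x => a b; rewrite /inO /= => h.
exists (GI ((a + b) %/ 2)%Z ((b - a) %/ 2)%Z).
have := divz_eq (a + b) 2; have := divz_eq (b - a) 2.
have : ((a + b) %% 2)%Z = 0 by lia.
have : ((b - a) %% 2)%Z = 0 by lia.
by move=> *; apply: gint_ext; rewrite /gmul /one_plus_i /=; lia.
Qed.

Lemma opi_nonunit : ~ gunit one_plus_i.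
Proof. by rewrite gunitE. Qed.

Lemma inO_dvd (d x : gint) : gdvd d x -> inO x -> inO d.
Proof.
move=> dx hx; apply: NNPP => /opi_dvdP hd.
exact: (opi_dvdP x).1 (gdvd_trans hd dx) hx.
Qed.

Definition real_odd (x : gint) : Prop := (re x %% 2)%Z = 1 /\ (im x %% 2)%Z = 0.

Lemma real_odd_normalize (x : gint) : real_odd x -> exists2 s, gmul s s = g1 & inOI (gmul s x).
Proof.
case: x => a b [/= ha hb]; rewrite /inOI /inO /gmul /=.
have [h4|h4] : (a %% 4)%Z = 1 \/ (a %% 4)%Z = 3 by lia.
- by exists g1; [apply: gint_ext | rewrite /=; lia].
- by exists (gopp g1); [apply: gint_ext | rewrite /=; lia].
Qed.

Lemma inO_normalize (x : gint) : inO x -> exists2 s, gunit s & inOI (gmul s x).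
Proof.
move=> hx; have [hxr|hxi] : real_odd x \/ real_odd (gmul gi x).
  by move: hx; rewrite /inO /real_odd /gmul /=; lia.
- by have [s /gunit_sqr1] := real_odd_normalize hxr; exists s.
- have [s /gunit_sqr1 hs] := real_odd_normalize hxi.
  exists (gmul s gi); first by apply: gunitM => //; rewrite /gunit; tauto.
  by rewrite (_ : gmul (gmul s gi) x = gmul s (gmul gi x)) //; ring.
Qed.

Lemma gprime_mulu (s p : gint) : gunit s -> gprime p -> gprime (gmul s p).
Proof.
move=> hs [p0 [pu hp]]; split; [|split].
- exact: gmul_neq0 (gunit_neq0 hs) p0.
- by rewrite gunitE gnormM (gunitE s).1 // mul1r -gunitE.
- move=> a b e; have [s' ss' hs'] := gunit_inv hs.
  have : p = gmul (gmul s' a) b by rewrite -(gmulKu p ss') e; ring.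
  case/hp => [h|]; [left | by right].
  by rewrite -(gmulKVu a ss'); apply: gunitM.
Qed.

Lemma gprime_dvd_exists (x : gint) : x <> g0 -> ~ gunit x -> exists2 p, gprime p & gdvd p x.
Proof.
elim/gnorm_ind: x => x IH x0 xu.
case: (classic (gprime x)) => [px | npx]; first by exists x; last exact: gdvd_refl.
have [a [b [e [au bu]]]] : exists a b, x = gmul a b /\ ~ gunit a /\ ~ gunit b.
  apply: NNPP => hn; apply: npx; split; [done | split; [done |]] => a b e.
  by apply: NNPP => hab; apply: hn; exists a, b; split => //; split => h; apply: hab; [left | right].
subst x; have [|p pp pa] := IH a _ (gmul_neq0l x0) au.
  exact: gnorm_mull_lt.
by exists p => //; apply: gdvd_mulr.
Qed.

Lemma odd_nonunit_split (x : gint) : x <> g0 -> inO x -> ~ gunit x ->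
  exists p y, (gprime p /\ inOI p) /\ x = gmul p y.
Proof.
move=> x0 xo xu; have [p pp [y e]] := gprime_dvd_exists x0 xu.
have [s hs sp] : exists2 s, gunit s & inOI (gmul s p).
  by apply: inO_normalize; apply: inO_dvd xo; exists y.
have [s' ss' _] := gunit_inv hs.
exists (gmul s p), (gmul s' y); split; first by split => //; apply: gprime_mulu.
by rewrite e; transitivity (gmul (gmul s s') (gmul p y)); [rewrite ss' | ]; ring.
Qed.

Lemma gprodpow_insert (p : gint) (ps : list (gint * nat)) : NoDup (map fst ps) ->
  exists ps', [/\ NoDup (map fst ps'), incl (map fst ps') (p :: map fst ps)
                & gprodpow ps' = gmul p (gprodpow ps)].
Proof.
elim: ps => [|[q a] ps IH] /= nd.
  exists [:: (p, 1%N)]; split; [by constructor; [|constructor] | exact: incl_refl | by rewrite /=; ring].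
case: (classic (q = p)) => [<- | qp].
  by exists ((q, a.+1) :: ps); split => //; [apply: incl_tl; apply: incl_refl | rewrite /=; ring].
have nq : ~ In q (map fst ps) by inversion nd.
have nd' : NoDup (map fst ps) by inversion nd.
have [ps' [nd'' inc e]] := IH nd'.
exists ((q, a) :: ps'); split => /=.
- by constructor => // /inc [pq | //]; apply: qp.
- by move=> r [<- | /inc [<- | ?]] /=; tauto.
- by rewrite e; ring.
Qed.

Lemma gfactorization (x : gint) : x <> g0 -> exists a e ps,
  [/\ gunit e, NoDup (map fst ps), (forall p, In p (map fst ps) -> gprime p /\ inOI p)
    & x = gmul e (gmul (gpow one_plus_i a) (gprodpow ps))].
Proof.
elim/gnorm_ind: x => x IH x0.
case: (classic (gunit x)) => [xu | xu].
  by exists 0%N, x, nil; split => //; [constructor | rewrite /=; ring].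
case: (classic (inO x)) => [xo | /opi_dvdP [y e]]; last first.
  subst x; have [|a [u [ps [hu nd hps ->]]]] := IH y _ (gmul_neq0r x0).
    by apply: gnorm_mulr_lt x0 opi_nonunit.
  by exists a.+1, u, ps; split => //; rewrite /=; ring.
have [p [y [pp e]]] := odd_nonunit_split x0 xo xu; subst x.
have [|a [u [ps [hu nd hps ->]]]] := IH y _ (gmul_neq0r x0).
  by apply: gnorm_mulr_lt x0 pp.1.2.1.
have [ps' [nd' inc e]] := gprodpow_insert p nd.
exists a, u, ps'; split => //; last by rewrite e; ring.
by move=> q /inc [<- | /hps].
Qed.

Lemma inO_mulu (u x : gint) : gunit u -> inO x -> inO (gmul u x).
Proof. by move=> hu hx; apply: NNPP => /opi_dvdP /(gdvd_unit_mull hu) /opi_dvdP. Qed.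

Lemma int_halves (x : int) : exists k, x = 2 * k \/ x = 2 * k + 1.
Proof. by exists (x %/ 2)%Z; have := divz_eq x 2; lia. Qed.

(* The real part of x^2 is 1 mod 4 for x real_odd, -1 mod 4 for gi * x real_odd, and even otherwise. *)
Lemma sum_sq_parity (a c : gint) : inO a ->
  gdvd (gpow one_plus_i 4) (gadd (gmul a a) (gmul c c)) ->
  (real_odd a /\ real_odd (gmul gi c)) \/ (real_odd c /\ real_odd (gmul gi a)).
Proof.
case: a c => a1 a2 [c1 c2]; rewrite /inO /real_odd /= => ha [w].
move=> /(f_equal re); rewrite /gmul /gadd /= => e.
have [k1 [|]] := int_halves a1; have [k2 [|]] := int_halves a2.
all: have [k3 [|]] := int_halves c1; have [k4 [|]] := int_halves c2.
all: move=> *; subst; lia.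
Qed.

Lemma gcd_unit_inO (a b : gint) : gcd_unit a b -> gdvd one_plus_i b -> inO a.
Proof. by move=> hab hb; apply: NNPP => /opi_dvdP ha; apply: opi_nonunit; apply: hab. Qed.

Lemma opi2_mul_normal_form (q : gint) : q <> g0 -> exists v a ps,
  gunit v /\ NoDup (map fst ps) /\ (forall pa, In pa ps -> gprime pa.1 /\ inOI pa.1) /\
  gmul v (gmul (gpow one_plus_i 2) q) = gmul (gpow one_plus_i (2 + a)) (gprodpow ps).
Proof.
move=> /gfactorization [a [e [ps [he nd hps ->]]]]; have [v ev hv] := gunit_inv he.
exists v, a, ps; do 3 split => //; first by move=> pa /(in_map fst); apply: hps.
transitivity (gmul (gmul e v) (gmul (gpow one_plus_i (2 + a)) (gprodpow ps))).
  by rewrite gpowD; ring.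
by rewrite ev; ring.
Qed.

Lemma sum_sq_dvd_opi4 (alpha beta gamma : gint) :
  gadd (gadd (gmul alpha alpha) (gmul gi (gmul beta beta))) (gmul gamma gamma) = g0 ->
  gdvd (gpow one_plus_i 2) beta ->
  gdvd (gpow one_plus_i 4) (gadd (gmul alpha alpha) (gmul gamma gamma)).
Proof.
move=> H [q Hq]; exists (gopp (gmul gi (gmul q q))).
have -> : gadd (gmul alpha alpha) (gmul gamma gamma) = gopp (gmul gi (gmul beta beta)).
  by apply: gaddr_eq0; rewrite -H; ring.
by rewrite Hq (gpowD _ 2 2); ring.
Qed.

Lemma gcd_unit_swap (alpha beta gamma : gint) :
  gadd (gadd (gmul alpha alpha) (gmul gi (gmul beta beta))) (gmul gamma gamma) = g0 ->
  beta <> g0 -> gcd_unit alpha beta -> gcd_unit gamma beta.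
Proof.
move=> H b0 /(gcd_unit_sqrl b0) hab d dc db; apply: hab => //.
have -> : gmul alpha alpha = gopp (gadd (gmul gi (gmul beta beta)) (gmul gamma gamma)).
  by apply: gaddr_eq0; rewrite -H; ring.
by apply/gdvd_opp/gdvd_add; [apply/gdvd_mull/gdvd_mulr | apply: gdvd_mulr].
Qed.

Lemma normal_form_units (alpha beta gamma v : gint) :
  gadd (gadd (gmul alpha alpha) (gmul gi (gmul beta beta))) (gmul gamma gamma) = g0 ->
  gmul (gmul alpha beta) gamma <> g0 -> gcd_unit alpha beta -> gunit v ->
  real_odd (gmul v alpha) -> real_odd (gmul gi (gmul v gamma)) ->
  exists u w, gunit u /\ gunit w /\
    gadd (gmul (gmul u alpha) (gmul u alpha)) (gmul gi (gmul (gmul v beta) (gmul v beta)))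
      = gmul (gmul w gamma) (gmul w gamma) /\
    inOI (gmul u alpha) /\ inOI (gmul w gamma) /\ gcd_unit (gmul u alpha) (gmul v beta) /\
    gmul (gmul (gmul u alpha) (gmul v beta)) (gmul w gamma) <> g0.
Proof.
move=> H Hnz Hab hv /real_odd_normalize [s1 s11 hX] /real_odd_normalize [s2 s22 hZ].
have gi_unit : gunit gi by rewrite /gunit; tauto.
have hu : gunit (gmul s1 v) := gunitM (gunit_sqr1 s11) hv.
have hw : gunit (gmul (gmul s2 gi) v) := gunitM (gunitM (gunit_sqr1 s22) gi_unit) hv.
exists (gmul s1 v), (gmul (gmul s2 gi) v); do 2 split => //; split; last split; last split.
- transitivity (gmul (gmul v v)
    (gadd (gmul (gmul s1 s1) (gmul alpha alpha)) (gmul gi (gmul beta beta)))); first by ring.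
  transitivity (gmul (gmul v v)
    (gmul (gmul (gmul s2 s2) (gmul gi gi)) (gmul gamma gamma))); last by ring.
  by rewrite s11 s22 gmul_gi_gi (_ : gmul g1 _ = gmul alpha alpha) ?(gaddr_eq0 H); ring.
- by rewrite (_ : gmul (gmul s1 v) alpha = gmul s1 (gmul v alpha)) //; ring.
- by rewrite (_ : gmul (gmul (gmul s2 gi) v) gamma = gmul s2 (gmul gi (gmul v gamma))) //; ring.
split; first exact: gcd_unit_mul_units.
have -> : gmul (gmul (gmul (gmul s1 v) alpha) (gmul v beta)) (gmul (gmul (gmul s2 gi) v) gamma)
    = gmul (gmul (gmul s1 v) (gmul v (gmul (gmul s2 gi) v))) (gmul (gmul alpha beta) gamma) by ring.
exact: gmul_neq0 (gunit_neq0 (gunitM hu (gunitM hv hw))) Hnz.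
Qed.

Lemma sol_mul_gi_third (X Y Z : gint) :
  gadd (gmul X X) (gmul gi (gmul Y Y)) = gmul Z Z -> gmul (gmul X Y) Z <> g0 ->
  gadd (gadd (gmul X X) (gmul gi (gmul Y Y))) (gmul (gmul gi Z) (gmul gi Z)) = g0 /\
  gmul (gmul X Y) (gmul gi Z) <> g0.
Proof.
move=> H Hnz; split.
  by rewrite H; transitivity (gmul (gadd g1 (gmul gi gi)) (gmul Z Z));
    [ring | rewrite gmul_gi_gi; ring].
have -> : gmul (gmul X Y) (gmul gi Z) = gmul gi (gmul (gmul X Y) Z) by ring.
by apply: gmul_neq0 Hnz; apply: gunit_neq0; rewrite /gunit; tauto.
Qed.

Theorem theorem4p9 :
  (forall alpha beta gamma : gint,
     gadd (gadd (gmul alpha alpha) (gmul gi (gmul beta beta))) (gmul gamma gamma) = g0 ->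
     gmul (gmul alpha beta) gamma <> g0 ->
     gcd_unit alpha beta ->
     gdvd (gpow one_plus_i 2) beta ->
     exists (u v w : gint) (X Y Z : gint),
       gunit u /\ gunit v /\ gunit w /\
       ((X = gmul u alpha /\ Y = gmul v beta /\ Z = gmul w gamma) \/
        (X = gmul u gamma /\ Y = gmul v beta /\ Z = gmul w alpha)) /\
       gadd (gmul X X) (gmul gi (gmul Y Y)) = gmul Z Z /\
       inOI X /\ inOI Z /\
       (exists (a1 : nat) (ps : list (gint * nat)),
          NoDup (map fst ps) /\
          (forall pa, In pa ps -> gprime (fst pa) /\ inOI (fst pa)) /\
          Y = gmul (gpow one_plus_i (2 + a1)) (gprodpow ps)) /\
       gcd_unit X Y /\
       gmul (gmul X Y) Z <> g0)
  /\
  (forall X Y Z : gint,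
     gadd (gmul X X) (gmul gi (gmul Y Y)) = gmul Z Z ->
     gcd_unit X Y ->
     gmul (gmul X Y) Z <> g0 ->
     gadd (gadd (gmul X X) (gmul gi (gmul Y Y))) (gmul (gmul gi Z) (gmul gi Z)) = g0 /\
     gcd_unit X Y /\
     gmul (gmul X Y) (gmul gi Z) <> g0).
Proof.
split; last first.
  by move=> X Y Z H Hg /(sol_mul_gi_third H) [].
move=> alpha beta gamma H Hnz Hab hb.
have b0 : beta <> g0 := gmul_neq0r (gmul_neq0l Hnz).
have [q Hq] := hb.
have [v [a1 [ps [hv Yform]]]] : exists v a ps,
    gunit v /\ NoDup (map fst ps) /\ (forall pa, In pa ps -> gprime pa.1 /\ inOI pa.1) /\
    gmul v beta = gmul (gpow one_plus_i (2 + a)) (gprodpow ps).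
  by rewrite Hq; apply: opi2_mul_normal_form; apply: (@gmul_neq0r (gpow one_plus_i 2)); rewrite -Hq.
have a_odd : inO (gmul v alpha).
  apply: inO_mulu => //; apply: gcd_unit_inO Hab _.
  by rewrite Hq; apply: gdvd_mulr; exists (gmul one_plus_i g1).
have E : gdvd (gpow one_plus_i 4)
    (gadd (gmul (gmul v alpha) (gmul v alpha)) (gmul (gmul v gamma) (gmul v gamma))).
  rewrite (_ : gadd _ _ = gmul (gmul v v) (gadd (gmul alpha alpha) (gmul gamma gamma))); last by ring.
  by apply: gdvd_mull; apply: sum_sq_dvd_opi4 H hb.
case: (sum_sq_parity a_odd E) => [[hX hZ] | [hX hZ]].
- have [u [w [hu [hw [eq [oX [oZ [g nz]]]]]]]] := normal_form_units H Hnz Hab hv hX hZ.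
  exists u, v, w, (gmul u alpha), (gmul v beta), (gmul w gamma).
  by do 3 split => //; split; [left | do 4 split => //; exists a1, ps].
- have H' : gadd (gadd (gmul gamma gamma) (gmul gi (gmul beta beta))) (gmul alpha alpha) = g0.
    by rewrite -H; ring.
  have Hnz' : gmul (gmul gamma beta) alpha <> g0.
    by rewrite (_ : gmul (gmul gamma beta) alpha = gmul (gmul alpha beta) gamma) //; ring.
  have [u [w [hu [hw [eq [oX [oZ [g nz]]]]]]]] :=
    normal_form_units H' Hnz' (gcd_unit_swap H b0 Hab) hv hX hZ.
  exists u, v, w, (gmul u gamma), (gmul v beta), (gmul w alpha).
  by do 3 split => //; split; [right | do 4 split => //; exists a1, ps].
Qed.
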